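(* Let $\vdash\subseteq Sqt$ satisfy (A), (Mon), (Cut), (Com), ($\wedge$I), ($\wedge$E), ($\to$0), ($\to$1), ($\to$2). For all $\varphi,\psi\in Form$ and $\Gamma\subseteq Form$, if $\Gamma\nvdash\varphi\to\psi$, then there is a $\vdash$-deduction closed $\Delta\subseteq Form$ such that $\varphi\in\Delta$, $\psi\notin\Delta$, $\Gamma R_\to\Delta$, and for every $\chi\notin\Delta$, $\psi\in\Gamma(\Delta,\chi)$.
   Context: $Form$: $\varphi::=p\mid\bot\mid(\varphi\wedge\varphi)\mid(\varphi\to\varphi)$ over a countable set $P0$ ($\wedge$ left-associative, binds tighter than $\to$). Sequents are pairs $(\Gamma,\varphi)$, $\Gamma\subseteq Form$; $\Gamma\vdash\varphi$ means $(\Gamma,\varphi)\in\vdash$, $\psi\vdash\varphi$ means $\{\psi\}\vdash\varphi$, $\vdash\varphi$ means $\emptyset\vdash\varphi$. Rules (for all $\Gamma,\Delta\subseteq Form$, formulas): (A) $\Gamma\cup\{\varphi\}\vdash\varphi$; (Mon) $\Gamma\subseteq\Delta$, $\Gamma\vdash\varphi\Rightarrow\Delta\vdash\varphi$; (Cut) $\Gamma\cup\{\psi\}\vdash\varphi$, $\Delta\vdash\psi\Rightarrow\Gamma\cup\Delta\vdash\varphi$; (Com) $\Gamma\vdash\varphi\Rightarrow\Gamma'\vdash\varphi$ for some finite $\Gamma'\subseteq\Gamma$; ($\wedge$I) $\{\varphi,\psi\}\vdash\varphi\wedge\psi$; ($\wedge$E) $\varphi\wedge\psi\vdash\varphi$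 and $\varphi\wedge\psi\vdash\psi$; ($\to$0) $\vdash\varphi\to\varphi$; ($\to$1) $\Gamma\vdash\varphi\Rightarrow\{\psi\to\chi:\chi\in\Gamma\}\vdash\psi\to\varphi$; ($\to$2) $\{\varphi\to\psi,\psi\to\chi\}\vdash\varphi\to\chi$. $\Delta$ is $\vdash$-deduction closed iff $\Delta\vdash\psi$ implies $\psi\in\Delta$. $\Gamma R_\to\Delta$ iff for all $\varphi,\psi$, $\varphi\to\psi\in\Gamma$ and $\varphi\in\Delta$ imply $\psi\in\Delta$. $\Gamma(\Delta,\chi)=\{\psi\in Form:$ there is $\alpha\in\Delta$ with $\Gamma\vdash\alpha\wedge\chi\to\psi\}$. *)

From Stdlib Require Import List.
Import ListNotations.

Inductive Form (P0 : Type) : Type :=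
| Var : P0 -> Form P0
| Bot : Form P0
| And : Form P0 -> Form P0 -> Form P0
| Imp : Form P0 -> Form P0 -> Form P0.
Arguments Var {P0} _.
Arguments Bot {P0}.
Arguments And {P0} _ _.
Arguments Imp {P0} _ _.

Definition countable (P0 : Type) : Prop :=
  exists f : P0 -> nat, forall x y, f x = f y -> x = y.

Definition FSet (P0 : Type) := Form P0 -> Prop.
Definition subset {P0} (G D : FSet P0) : Prop := forall x, G x -> D x.
Definition union {P0} (G D : FSet P0) : FSet P0 := fun x => G x \/ D x.
Definition single {P0} (a : Form P0) : FSet P0 := fun x => x = a.
Definition pair {P0} (a b : Form P0) : FSet P0 := fun x => x = a \/ x = b.
Definition emptyset {P0} : FSet P0 := fun _ => False.
Definition finite_set {P0} (G : FSet P0) : Prop :=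
  exists l : list (Form P0), forall x, G x <-> In x l.

Definition Cons (P0 : Type) := FSet P0 -> Form P0 -> Prop.

Section Rules.
Context {P0 : Type} (d : Cons P0).
Definition R_A := forall G phi, d (union G (single phi)) phi.
Definition R_Mon := forall G D phi, subset G D -> d G phi -> d D phi.
Definition R_Cut := forall G D psi phi,
  d (union G (single psi)) phi -> d D psi -> d (union G D) phi.
Definition R_Com := forall G phi, d G phi ->
  exists G', finite_set G' /\ subset G' G /\ d G' phi.
Definition R_AndI := forall phi psi, d (pair phi psi) (And phi psi).
Definition R_AndE := forall phi psi,
  d (single (And phi psi)) phi /\ d (single (And phi psi)) psi.
Definition R_Imp0 := forall phi, d emptyset (Imp phi phi).
Definition R_Imp1 := forall G phi psi, d G phi ->
  d (fun x => exists chi, G chi /\ x = Imp psi chi) (Imp psi phi).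
Definition R_Imp2 := forall phi psi chi,
  d (pair (Imp phi psi) (Imp psi chi)) (Imp phi chi).

Definition all_rules :=
  R_A /\ R_Mon /\ R_Cut /\ R_Com /\ R_AndI /\ R_AndE /\ R_Imp0 /\ R_Imp1 /\ R_Imp2.

Definition deduction_closed (D : FSet P0) := forall psi, d D psi -> D psi.

Definition R_imp (G D : FSet P0) :=
  forall phi psi, G (Imp phi psi) -> D phi -> D psi.

(* Gamma(Delta, chi); "alpha /\ chi -> psi" parses as (alpha /\ chi) -> psi *)
Definition GammaDC (G D : FSet P0) (chi : Form P0) : FSet P0 :=
  fun psi => exists alpha, D alpha /\ d G (Imp (And alpha chi) psi).
End Rules.

(* A Lindenbaum-style construction relative to G.  Start from the G-filter
   D0 = {b | G |- phi -> b}, which avoids psi (no member implies psi under G)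
   since G |/- phi -> psi.  Enumerate all formulas and, at stage n, replace the
   current filter D by G(D, chi) for the n-th formula chi whenever this still
   avoids psi.  The union D is a nonempty G-filter, hence deduction closed by
   compactness (Com), and R_imp G D holds because G proves each of its own
   implications.  If chi is not in D, then adding chi was refused at its stage,
   so some alpha /\ chi -> psi is provable from G with alpha in D. *)

From Stdlib Require Import List Classical Arith Cantor.

Section Lindenbaum.
Context {P0 : Type} (d : Cons P0).
Hypotheses (HA : R_A d) (HMon : R_Mon d) (HCut : R_Cut d) (HCom : R_Com d)
  (HAndI : R_AndI d) (HAndE : R_AndE d) (HImp0 : R_Imp0 d) (HImp1 : R_Imp1 d) (HImp2 : R_Imp2 d).

Lemma cut_same (G : FSet P0) (a b : Form P0) :
  d (union G (single a)) b -> d G a -> d G b.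
Proof.
  intros Hab Ha. apply (HMon (union G G)); [intros x [h|h]; exact h|].
  exact (HCut _ _ _ _ Hab Ha).
Qed.

Variable G : FSet P0.

Lemma cons_of_mem (a : Form P0) : G a -> d G a.
Proof.
  intros Ha. apply (HMon (union G (single a))); [|apply HA].
  intros x [h|h]; [exact h|]. unfold single in h; subst; exact Ha.
Qed.

Lemma cut_list (l : list (Form P0)) (H : FSet P0) (b : Form P0) :
  (forall x, H x -> In x l) -> (forall x, In x l -> d G x) ->
  d (union G H) b -> d G b.
Proof.
  revert H. induction l as [|a l IH]; intros H Hl Hder Hb.
  - apply (HMon (union G H)); [|exact Hb].
    intros x [h|h]; [exact h|destruct (Hl x h)].
  - apply (IH (fun x => H x /\ x <> a)).
    + intros x [hx hne]. destruct (Hl x hx); [congruence|assumption].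
    + intros x hx; apply Hder; right; exact hx.
    + apply (cut_same _ a).
      * apply (HMon (union G H)); [|exact Hb].
        intros x [h|h]; [left; left; exact h|].
        destruct (classic (x = a)) as [e|e]; [right; exact e|left; right; auto].
      * apply (HMon G); [intros x h; left; exact h|]. apply Hder; left; reflexivity.
Qed.

Lemma imp_refl (a : Form P0) : d G (Imp a a).
Proof. apply (HMon emptyset); [intros x []|apply HImp0]. Qed.

Lemma imp_trans (a b c : Form P0) :
  d G (Imp a b) -> d G (Imp b c) -> d G (Imp a c).
Proof.
  intros Hab Hbc. apply (cut_same _ (Imp b c)); [|exact Hbc].
  apply (cut_same _ (Imp a b)).
  - apply (HMon (pair (Imp a b) (Imp b c))); [|apply HImp2].
    intros x [h|h]; [right; exact h|left; right; exact h].
  - apply (HMon G); [intros x h; left; exact h|exact Hab].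
Qed.

Lemma imp_map1 (a b c : Form P0) :
  d (single a) b -> d G (Imp c a) -> d G (Imp c b).
Proof.
  intros Hab Hca. apply (cut_same _ (Imp c a)); [|exact Hca].
  refine (HMon _ _ _ _ (HImp1 _ _ c Hab)).
  intros x [x' [hx ->]]. unfold single in hx; subst. right; reflexivity.
Qed.

Lemma imp_map2 (a1 a2 b c : Form P0) :
  d (pair a1 a2) b -> d G (Imp c a1) -> d G (Imp c a2) -> d G (Imp c b).
Proof.
  intros Hb H1 H2. apply (cut_same _ (Imp c a2)); [|exact H2].
  apply (cut_same _ (Imp c a1)).
  - refine (HMon _ _ _ _ (HImp1 _ _ c Hb)).
    intros x [x' [[e|e] ->]]; subst; [right|left; right]; reflexivity.
  - apply (HMon G); [intros x h; left; exact h|exact H1].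
Qed.

Lemma imp_and_l (a b : Form P0) : d G (Imp (And a b) a).
Proof. apply (imp_map1 (And a b)); [apply HAndE|apply imp_refl]. Qed.

Lemma imp_and_r (a b : Form P0) : d G (Imp (And a b) b).
Proof. apply (imp_map1 (And a b)); [apply HAndE|apply imp_refl]. Qed.

Lemma imp_and_intro (a b c : Form P0) :
  d G (Imp c a) -> d G (Imp c b) -> d G (Imp c (And a b)).
Proof. apply imp_map2, HAndI. Qed.

Record imp_filter (S : FSet P0) : Prop := {
  filter_and : forall a b, S a -> S b -> S (And a b);
  filter_imp : forall a b, S a -> d G (Imp a b) -> S b }.

Lemma subset_GammaDC (S : FSet P0) (chi : Form P0) : subset S (GammaDC d G S chi).
Proof. intros a Ha. exists a. split; [exact Ha|apply imp_and_l]. Qed.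

Lemma GammaDC_mem (S : FSet P0) (a chi : Form P0) : S a -> GammaDC d G S chi chi.
Proof. intros Ha. exists a. split; [exact Ha|apply imp_and_r]. Qed.

Lemma imp_filter_GammaDC (S : FSet P0) (chi : Form P0) :
  imp_filter S -> imp_filter (GammaDC d G S chi).
Proof.
  intros [HSand HSimp]. split.
  - intros a b [a' [Ha' Ha]] [b' [Hb' Hb]]. exists (And a' b').
    split; [apply HSand; assumption|].
    apply imp_and_intro.
    + apply (imp_trans _ (And a' chi)); [|exact Ha].
      apply imp_and_intro; [|apply imp_and_r].
      apply (imp_trans _ (And a' b')); [apply imp_and_l|apply imp_and_l].
    + apply (imp_trans _ (And b' chi)); [|exact Hb].
      apply imp_and_intro; [|apply imp_and_r].
      apply (imp_trans _ (And a' b')); [apply imp_and_l|apply imp_and_r].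
  - intros a b [a' [Ha' Ha]] Hab. exists a'.
    split; [exact Ha'|apply (imp_trans _ a); assumption].
Qed.

Lemma imp_filter_R_imp (S : FSet P0) : imp_filter S -> R_imp G S.
Proof.
  intros HS a b Hab Ha. apply (filter_imp _ HS a); [exact Ha|apply cons_of_mem, Hab].
Qed.

(* [a0] stands in for the empty conjunction. *)
Lemma imp_filter_conj_list (S : FSet P0) (a0 : Form P0) (l : list (Form P0)) :
  imp_filter S -> S a0 -> (forall x, In x l -> S x) ->
  exists c, S c /\ forall x, In x l -> d G (Imp c x).
Proof.
  intros HS Ha0. induction l as [|a l IH]; intros Hl.
  - exists a0. split; [exact Ha0|intros x []].
  - destruct IH as [c [Hc Hcl]]; [intros x hx; apply Hl; right; exact hx|].
    exists (And c a). split.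
    { apply (filter_and _ HS); [exact Hc|apply Hl; left; reflexivity]. }
    intros x [<-|hx]; [apply imp_and_r|].
    apply (imp_trans _ c); [apply imp_and_l|apply Hcl, hx].
Qed.

(* By compactness S |- b uses finitely many members of S; their conjunction c is
   in S, and (Imp1) turns the derivation into G |- c -> b. *)
Lemma imp_filter_deduction_closed (S : FSet P0) (a0 : Form P0) :
  imp_filter S -> S a0 -> deduction_closed d S.
Proof.
  intros HS Ha0 b Hb. destruct (HCom _ _ Hb) as [S' [[l Hl] [HS'S HS'b]]].
  destruct (imp_filter_conj_list S a0 l HS Ha0) as [c [Hc Hcl]].
  { intros x hx. apply HS'S, Hl, hx. }
  apply (filter_imp _ HS c); [exact Hc|].
  apply (cut_list (map (Imp c) l) (fun x => exists chi, S' chi /\ x = Imp c chi)).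
  - intros x [chi [Hchi ->]]. apply in_map, Hl, Hchi.
  - intros x hx. apply in_map_iff in hx. destruct hx as [chi [<- hchi]].
    apply Hcl, hchi.
  - apply (HMon _ _ _ (fun x h => or_intror h)), HImp1, HS'b.
Qed.

Section Construction.
Variables (phi psi : Form P0) (enc : Form P0 -> nat).
Hypothesis enc_inj : forall x y, enc x = enc y -> x = y.
Hypothesis phi_not_imp_psi : ~ d G (Imp phi psi).

Definition avoids (S : FSet P0) : Prop := forall a, S a -> ~ d G (Imp a psi).

Definition admissible (S : FSet P0) : Prop := imp_filter S /\ avoids S /\ S phi.

Definition stage (n : nat) (S : FSet P0) : FSet P0 := fun b =>
  (exists chi, enc chi = n /\ avoids (GammaDC d G S chi) /\ GammaDC d G S chi b) \/
  (~ (exists chi, enc chi = n /\ avoids (GammaDC d G S chi)) /\ S b).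

Lemma stage_cases (n : nat) (S : FSet P0) :
  (exists chi, avoids (GammaDC d G S chi) /\
     forall b, stage n S b <-> GammaDC d G S chi b) \/
  (forall b, stage n S b <-> S b).
Proof.
  destruct (classic (exists chi, enc chi = n /\ avoids (GammaDC d G S chi)))
    as [[chi [Hn Hav]]|Hno].
  - left. exists chi. split; [exact Hav|]. intros b. split.
    + intros [[chi' [Hn' [_ Hb]]]|[Hno _]].
      * rewrite <- Hn in Hn'. apply enc_inj in Hn'. subst. exact Hb.
      * exfalso. apply Hno. exists chi. split; assumption.
    + intros Hb. left. exists chi. repeat split; assumption.
  - right. intros b. split.
    + intros [[chi [Hn [Hav _]]]|[_ Hb]]; [|exact Hb].
      exfalso. apply Hno. exists chi. split; assumption.
    + intros Hb. right. split; assumption.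
Qed.

Lemma admissible_ext (S T : FSet P0) :
  (forall b, T b <-> S b) -> admissible S -> admissible T.
Proof.
  intros E [[HSand HSimp] [HSav HSphi]]. repeat split.
  - intros a b Ha Hb. apply E. apply HSand; apply E; assumption.
  - intros a b Ha Hab. apply E. apply (HSimp a); [apply E|]; assumption.
  - intros a Ha. apply HSav, E, Ha.
  - apply E, HSphi.
Qed.

Lemma admissible_stage (n : nat) (S : FSet P0) : admissible S -> admissible (stage n S).
Proof.
  intros HS. destruct (stage_cases n S) as [[chi [Hav E]]|E];
    apply (admissible_ext _ _ E); [|exact HS].
  destruct HS as [HSf [_ HSphi]]. repeat split.
  - apply (filter_and _ (imp_filter_GammaDC _ _ HSf)).
  - apply (filter_imp _ (imp_filter_GammaDC _ _ HSf)).
  - exact Hav.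
  - apply subset_GammaDC, HSphi.
Qed.

Lemma subset_stage (n : nat) (S : FSet P0) : subset S (stage n S).
Proof.
  intros b Hb. destruct (stage_cases n S) as [[chi [_ E]]|E]; apply E;
    [apply subset_GammaDC|]; exact Hb.
Qed.

Fixpoint chain (n : nat) : FSet P0 :=
  match n with
  | 0 => fun b => d G (Imp phi b)
  | S n => stage n (chain n)
  end.

Lemma chain_admissible (n : nat) : admissible (chain n).
Proof.
  induction n as [|n IH]; [|apply admissible_stage, IH].
  repeat split.
  - intros a b Ha Hb. apply imp_and_intro; assumption.
  - intros a b Ha Hab. apply (imp_trans _ a); assumption.
  - intros a Ha Hapsi. apply phi_not_imp_psi, (imp_trans _ a); assumption.
  - apply imp_refl.
Qed.

Lemma chain_mono (m n : nat) : m <= n -> subset (chain m) (chain n).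
Proof.
  induction 1 as [|n _ IH]; [intros b Hb; exact Hb|].
  intros b Hb. apply subset_stage, IH, Hb.
Qed.

Definition limit : FSet P0 := fun b => exists n, chain n b.

Lemma limit_admissible : admissible limit.
Proof.
  repeat split.
  - intros a b [m Ha] [n Hb]. exists (max m n).
    apply (filter_and _ (proj1 (chain_admissible (max m n)))).
    + exact (chain_mono m _ (Nat.le_max_l m n) a Ha).
    + exact (chain_mono n _ (Nat.le_max_r m n) b Hb).
  - intros a b [n Ha] Hab. exists n.
    apply (filter_imp _ (proj1 (chain_admissible n)) a); assumption.
  - intros a [n Ha]. apply (chain_admissible n), Ha.
  - exists 0. apply (chain_admissible 0).
Qed.

(* If chi is not in the limit, the stage coded by chi refused it. *)
Lemma limit_GammaDC_psi (chi : Form P0) : ~ limit chi -> GammaDC d G limit chi psi.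
Proof.
  intros Hchi. set (n := enc chi).
  destruct (classic (avoids (GammaDC d G (chain n) chi))) as [Hav|Hnav].
  - exfalso. apply Hchi. exists (S n). left. exists chi. repeat split; [exact Hav|].
    apply (GammaDC_mem _ phi), (chain_admissible n).
  - apply NNPP. intros Hno. apply Hnav. intros a [c [Hc Hca]] Hapsi.
    apply Hno. exists c. split; [exists n; exact Hc|]. apply (imp_trans _ a); assumption.
Qed.

Lemma limit_not_psi : ~ limit psi.
Proof. intros Hpsi. apply (proj1 (proj2 limit_admissible) psi Hpsi), imp_refl. Qed.

Lemma limit_spec :
  deduction_closed d limit /\ limit phi /\ ~ limit psi /\ R_imp G limit /\
  (forall chi, ~ limit chi -> GammaDC d G limit chi psi).
Proof.
  destruct limit_admissible as [Hf [_ Hphi]].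
  repeat split.
  - apply (imp_filter_deduction_closed _ phi); assumption.
  - exact Hphi.
  - exact limit_not_psi.
  - apply imp_filter_R_imp, Hf.
  - exact limit_GammaDC_psi.
Qed.

End Construction.
End Lindenbaum.

Fixpoint encode_Form {P0 : Type} (f : P0 -> nat) (x : Form P0) : nat :=
  match x with
  | Var p => to_nat (0, f p)
  | Bot => to_nat (1, 0)
  | And a b => to_nat (2, to_nat (encode_Form f a, encode_Form f b))
  | Imp a b => to_nat (3, to_nat (encode_Form f a, encode_Form f b))
  end.

Lemma countable_Form (P0 : Type) : countable P0 -> countable (Form P0).
Proof.
  intros [f Hf]. exists (encode_Form f).
  induction x as [p| |a IHa b IHb|a IHa b IHb]; destruct y as [q| |c e|c e];
    cbn [encode_Form]; intros h; apply to_nat_inj in h; try discriminate; try reflexivity.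
  1: injection h as h; f_equal; auto.
  all: apply (f_equal snd) in h; cbn [snd] in h; apply to_nat_inj in h.
  all: injection h as h1 h2; f_equal; auto.
Qed.

Theorem mainTheorem10 (P0 : Type) (HP0 : countable P0) (d : Cons P0) :
  all_rules d ->
  forall (phi psi : Form P0) (G : FSet P0),
    ~ d G (Imp phi psi) ->
    exists D : FSet P0,
      deduction_closed d D /\ D phi /\ ~ D psi /\ R_imp G D /\
      (forall chi, ~ D chi -> GammaDC d G D chi psi).
Proof.
  intros (HA & HMon & HCut & HCom & HAndI & HAndE & HImp0 & HImp1 & HImp2)
    phi psi G Hphipsi.
  destruct (countable_Form P0 HP0) as [enc Henc].
  exists (limit d G phi psi enc).
  eapply limit_spec; eassumption.
Qed.
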